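(* Let $u$ be a fast decreasing distribution on $\mathbb R^D$ (acting on $\mathbb C[\boldsymbol x]$), $\mathcal Q_2\in\mathbb C[\boldsymbol x]$ of degree $m_2$ with $Z(\mathcal Q_2)\cap\operatorname{supp}u=\varnothing$, and $\check u$ a linear functional on $\mathbb C[\boldsymbol x]$ with $\mathcal Q_2\check u=u$; assume $u,\check u$ quasi-definite, and let $R=\langle\check u,P(\boldsymbol x)\chi(\boldsymbol x)^\top\rangle$. Let $k\ge m_2$ and let $\mathcal M_k=\{\boldsymbol\beta_1,\dots,\boldsymbol\beta_r\}$, $r=N_{k-1}-N_{k-m_2-1}$, be a poised set of distinct multi-indices with $|\boldsymbol\beta_i|<k$, i.e. the matrix with block rows $(R_{[l],\boldsymbol\beta_1},\dots,R_{[l],\boldsymbol\beta_r})$, $l=k-m_2,\dots,k-1$, is nonsingular. Then $$\check P_{[k]}(\boldsymbol x)=\Theta_*\begin{pmatrix}R_{[k-m_2],\boldsymbol\beta_1}&\cdots&R_{[k-m_2],\boldsymbol\beta_r}&P_{[k-m_2]}(\boldsymbol x)\\ \vdots&&\vdots&\vdots\\ R_{[k],\boldsymbol\beta_1}&\cdots&R_{[k],\boldsymbol\beta_r}&P_{[k]}(\boldsymbol x)\end{pmatrix},$$ $$\check H_{[k]}\Big(\big(\mathcal Q_2(\boldsymbol\Lambda)\big)_{[k-m_2],[k]}\Big)^\top=\Theta_*\begin{pmatrix}R_{[k-m_2],\boldsymbol\beta_1}&\cdots&R_{[k-m_2],\boldsymbol\beta_r}&H_{[k-m_2]}\\ R_{[k-m_2+1],\boldsymbol\beta_1}&\cdots&R_{[k-m_2+1],\boldsymbol\beta_r}&0\\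 \vdots&&\vdots&\vdots\\ R_{[k],\boldsymbol\beta_1}&\cdots&R_{[k],\boldsymbol\beta_r}&0\end{pmatrix},$$ $$\check H_{[k]}=\Theta_*\begin{pmatrix}R_{[k-m_2],\boldsymbol\beta_1}&\cdots&R_{[k-m_2],\boldsymbol\beta_r}&R_{[k-m_2],[k]}\\ \vdots&&\vdots&\vdots\\ R_{[k],\boldsymbol\beta_1}&\cdots&R_{[k],\boldsymbol\beta_r}&R_{[k],[k]}\end{pmatrix}.$$
   Context: $[k]=\{\boldsymbol\alpha\in\mathbb Z_+^D:|\boldsymbol\alpha|=k\}$, $|[k]|=\binom{D+k-1}{k}$, $N_k=\binom{D+k}{D}$, $N_{-1}=0$. Multi-indices ordered by graded lexicographic order; $\chi(\boldsymbol x)$ semi-infinite vector of monomials in that order, blocks $\chi_{[k]}$; semi-infinite matrices have blocks $A_{[k],[l]}\in\mathbb C^{|[k]|\times|[l]|}$; $A_{[l],\boldsymbol\beta}$ is the column of block row $[l]$ indexed by $\boldsymbol\beta$; zero blocks $0$ have the appropriate size. Spectral matrices $(\Lambda_a)_{\boldsymbol\alpha,\boldsymbol\beta}=\delta_{\boldsymbol\alpha+\boldsymbol e_a,\boldsymbol\beta}$, $\mathcal Q_2(\boldsymbol\Lambda)=\mathcal Q_2(\Lambda_1,\dots,\Lambda_D)$. For a linear functional $u$, $\langle Qu,P\rangle:=\langle u,QP\rangle$; moment matrix $G=\langle u,\chi\chi^\top\rangle$; quasi-definite: all block truncations nonsingular, then $G=S^{-1}HS^{-\top}$, $S$ block lower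 unitriangular, $H$ block diagonal with blocks $H_{[k]}$, monic orthogonal polynomials $P=S\chi$ with blocks $P_{[k]}$; checked symbols refer to $\check u$. Last quasi-determinant: $\Theta_*\begin{pmatrix}A&B\\C&D\end{pmatrix}=D-CA^{-1}B$, the last block row/column being the last displayed ones. *)

From HB Require Import structures.
From mathcomp Require Import all_boot all_order all_algebra.
From mathcomp Require Import reals.
From mathcomp Require Import complex.
From mathcomp Require Import mpoly.

Set Implicit Arguments.
Unset Strict Implicit.
Unset Printing Implicit Defensive.

Import Order.TTheory GRing.Theory Num.Theory.
Local Open Scope ring_scope.

(* Multi-indices alpha in Z_+^D are the monomials 'X_{1..D}; |alpha| = mdeg. *)

(* Lexicographic order (x_1 > x_2 > ... > x_D) used inside a homogeneous
   block: a precedes b iff a = b or, at the first index where they differ,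
   a has the larger exponent. *)
Definition lexge (D : nat) (a b : 'X_{1..D}) : bool :=
  (a == b) ||
  [exists i : 'I_D, (b i < a i)%N && [forall j : 'I_D, (j < i)%N ==> (a j == b j)]].

Definition blk (D k : nat) : seq 'X_{1..D} :=
  sort (@lexge D)
    [seq bmnm m | m <- enum {: 'X_{1..D < k.+1}} & mdeg (bmnm m) == k].

Definition grl (D a b : nat) : seq 'X_{1..D} :=
  flatten [seq blk D l | l <- iota a (b - a)].

(* Semi-infinite matrices, indexed by multi-indices. *)
Definition smat (D : nat) (T : Type) := 'X_{1..D} -> 'X_{1..D} -> T.

Definition subml (D : nat) (T : Type) (A : smat D T) (rs cs : seq 'X_{1..D})
  : 'M[T]_(size rs, size cs) :=
  \matrix_(i, j) A (nth 0%MM rs i) (nth 0%MM cs j).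

Definition subm (D : nat) (T : Type) (A : smat D T) (rs : seq 'X_{1..D}) (n : nat)
  (beta : 'I_n -> 'X_{1..D}) : 'M[T]_(size rs, n) :=
  \matrix_(i, j) A (nth 0%MM rs i) (beta j).

Definition pcol (D : nat) (T : Type) (P : 'X_{1..D} -> T) (rs : seq 'X_{1..D})
  : 'cV[T]_(size rs) :=
  \col_i P (nth 0%MM rs i).

(* Last quasi-determinant  Theta_* ( A B ; C Dm ) = Dm - C A^{-1} B. *)
Definition qdet (T : comUnitRingType) (r p q : nat) (A : 'M[T]_r) (B : 'M[T]_(r, p))
  (C : 'M[T]_(q, r)) (Dm : 'M[T]_(q, p)) : 'M[T]_(q, p) :=
  Dm - C *m invmx A *m B.

Definition mpC_mx (D : nat) (F : fieldType) (m n : nat) (A : 'M[F]_(m, n))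
  : 'M[{mpoly F[D]}]_(m, n) :=
  map_mx (fun c : F => c%:MP) A.

Definition lin_fun (D : nat) (F : fieldType) (u : {mpoly F[D]} -> F) : Prop :=
  forall (c : F) (p q : {mpoly F[D]}), u (c *: p + q) = c * u p + u q.

Definition mom (D : nat) (F : fieldType) (u : {mpoly F[D]} -> F) : smat D F :=
  fun a b => u ('X_[a] * 'X_[b]).

Definition quasidef (D : nat) (F : fieldType) (u : {mpoly F[D]} -> F) : Prop :=
  forall k : nat, \det (subml (mom u) (grl D 0 k.+1) (grl D 0 k.+1)) != 0.

Definition block_lower_unitri (D : nat) (F : fieldType) (S : smat D F) : Prop :=
  forall a b : 'X_{1..D},
    ((mdeg a < mdeg b)%N -> S a b = 0) /\
    (mdeg a = mdeg b -> S a b = (a == b)%:R).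

Definition block_diag (D : nat) (F : fieldType) (H : smat D F) : Prop :=
  forall a b : 'X_{1..D}, mdeg a != mdeg b -> H a b = 0.

(* Gauss--Borel factorization G = S^{-1} H S^{-T}, written (S lower
   unitriangular, hence invertible) as S G S^T = H; all sums are finite since
   S a c = 0 for |c| > |a|. *)
Definition GB_fact (D : nat) (F : fieldType) (G S H : smat D F) : Prop :=
  [/\ block_lower_unitri S, block_diag H &
      forall a b : 'X_{1..D},
        \sum_(c <- grl D 0 (mdeg a).+1) \sum_(d <- grl D 0 (mdeg b).+1)
          S a c * G c d * S b d = H a b].

Definition opoly (D : nat) (F : fieldType) (S : smat D F) (a : 'X_{1..D})
  : {mpoly F[D]} :=
  \sum_(c <- grl D 0 (mdeg a).+1) S a c *: 'X_[c].

Definition Rmat (D : nat) (F : fieldType) (uc : {mpoly F[D]} -> F) (S : smat D F)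
  : smat D F :=
  fun a b => uc (opoly S a * 'X_[b]).

(* Q(Lambda) = sum_m Q_m Lambda^m, with (Lambda^m)_{a,b} = delta_{a+m,b}. *)
Definition QLam (D : nat) (F : fieldType) (Q : {mpoly F[D]}) : smat D F :=
  fun a b => \sum_(m <- msupp Q) Q@_m * ((a + m)%MM == b)%:R.

(* Last block column ( H_[k-m2] ; 0 ; ... ; 0 ) of the second formula. *)
Definition Hlast (D : nat) (F : fieldType) (H : smat D F) (k m2 : nat) : smat D F :=
  fun a b => if mdeg a == (k - m2)%N then H a b else 0.

(* For |a| = k, the polynomial P̌_a - P_a has degree < k and, since u = Q2 ǔ,
   it is u-orthogonal to every monomial of degree < k - m2: by
   quasi-definiteness of u it is a combination of the P_c with
   k - m2 <= |c| < k.  The poised monomials x^β_j determine the coefficients,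
   namely minus the rows of R_{[k],β} (R_{[k-m2..k-1],β})^{-1}, which is the first formula.
   Pairing it with x^b, |b| = k, under ǔ gives Ȟ_[k] (third formula); pairing
   it with x^y, |y| = k - m2, under u = Q2 ǔ gives Ȟ_[k] Q2(Λ)^T (second). *)

From HB Require Import structures.
From mathcomp Require Import all_boot all_order all_algebra.
From mathcomp Require Import reals complex mpoly.
From mathcomp Require Import zify.

Set Implicit Arguments.
Unset Strict Implicit.
Unset Printing Implicit Defensive.

Import Order.TTheory GRing.Theory Num.Theory.
Local Open Scope ring_scope.

Section Blocks.
Variable D : nat.
Implicit Types m : 'X_{1..D}.

Lemma mem_blk k m : (m \in blk D k) = (mdeg m == k).
Proof.
rewrite /blk mem_sort; apply/mapP/idP => [[x] | /eqP mk].
  by rewrite mem_filter => /andP[mk _] ->.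
have lt_mk : (mdeg m < k.+1)%N by rewrite mk.
by exists (BMultinom lt_mk); rewrite // mem_filter /= mk eqxx mem_enum.
Qed.

Lemma uniq_blk k : uniq (blk D k).
Proof.
rewrite /blk sort_uniq map_inj_uniq; last by move=> x y; apply: val_inj.
exact/filter_uniq/(enum_uniq (pred_of_simpl predT)).
Qed.

Lemma mem_grl a b m : (m \in grl D a b) = (a <= mdeg m < b)%N.
Proof.
rewrite /grl; apply/flattenP/idP => [[s /mapP[l]] | /andP[am mb]].
  by rewrite mem_iota => /andP[al lb] -> /[!mem_blk] /eqP ->; apply/andP; split; lia.
exists (blk D (mdeg m)); last by rewrite mem_blk.
by apply/mapP; exists (mdeg m); rewrite // mem_iota am /=; lia.
Qed.

Lemma uniq_grl a b : uniq (grl D a b).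
Proof.
rewrite /grl; move: (b - a)%N => n; elim: n a => [|n IH] a //=.
rewrite cat_uniq uniq_blk IH andbT /=; apply/hasPn => m.
move=> /flattenP[s /mapP[l]]; rewrite mem_iota => /andP[al _] ->.
by rewrite !mem_blk => /eqP ->; rewrite neq_ltn al orbT.
Qed.

Lemma grl_cat a b c : (a <= b <= c)%N -> grl D a c = grl D a b ++ grl D b c.
Proof.
move=> /andP[ab bc]; rewrite /grl -flatten_cat -map_cat.
have -> : (c - a = (b - a) + (c - b))%N by lia.
by rewrite iotaD subnKC.
Qed.

Lemma grl0S n : grl D 0 n.+1 = grl D 0 n ++ blk D n.
Proof. by rewrite (@grl_cat 0 n n.+1) ?leqnSn // /grl subSnn /= cats0. Qed.

Lemma mdeg_nth_blk k (i : 'I_(size (blk D k))) : mdeg (nth 0%MM (blk D k) i) = k.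
Proof. by apply/eqP; rewrite -mem_blk mem_nth. Qed.

Lemma mdeg_nth_grl a b (j : 'I_(size (grl D a b))) : (a <= mdeg (nth 0%MM (grl D a b) j) < b)%N.
Proof. by rewrite -mem_grl mem_nth. Qed.

End Blocks.

Lemma sum_delta (T : eqType) (V : nzRingType) (s : seq T) (f : T -> V) m :
  uniq s -> \sum_(c <- s) f c * (c == m)%:R = if m \in s then f m else 0.
Proof.
move=> us; case: ifPn => [ms | /memPn ms].
  rewrite (bigD1_seq m) //= eqxx mulr1 big1 ?addr0 // => c /negbTE ->.
  by rewrite mulr0.
by rewrite big1_seq // => c /andP[_ /ms /negbTE ->]; rewrite mulr0.
Qed.

Section LinearFunctional.
Variables (F : fieldType) (D : nat) (w : {mpoly F[D]} -> F).
Hypothesis hw : lin_fun w.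
Implicit Types p q : {mpoly F[D]}.

Lemma lin_funB p q : w (p - q) = w p - w q.
Proof. by rewrite addrC -scaleN1r hw mulN1r addrC. Qed.

Lemma lin_fun0 : w 0 = 0.
Proof. by rewrite -(subrr (0 : {mpoly F[D]})) lin_funB subrr. Qed.

Lemma lin_funD p q : w (p + q) = w p + w q.
Proof. by have := hw 1 p q; rewrite scale1r mul1r. Qed.

Lemma lin_funZ c p : w (c *: p) = c * w p.
Proof. by rewrite -[c *: p]addr0 hw lin_fun0 addr0. Qed.

Lemma lin_fun_sum (I : Type) (s : seq I) (f : I -> {mpoly F[D]}) :
  w (\sum_(i <- s) f i) = \sum_(i <- s) w (f i).
Proof. by elim: s => [|i s IH]; rewrite ?big_nil ?lin_fun0 // !big_cons lin_funD IH. Qed.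

Lemma lin_fun_comb p n (c : 'I_n -> F) (P : 'I_n -> {mpoly F[D]}) x :
  w ((p - \sum_(j < n) c j *: P j) * x) = w (p * x) - \sum_(j < n) c j * w (P j * x).
Proof.
rewrite mulrBl lin_funB mulr_suml lin_fun_sum; congr (_ - _).
by apply: eq_bigr => j _; rewrite -scalerAl lin_funZ.
Qed.

End LinearFunctional.

Section DegreeBounds.
Variables (R : nzRingType) (D : nat).
Implicit Types (p : {mpoly R[D]}) (m : 'X_{1..D}).

Lemma msize_leP n p : (msize p <= n)%N <-> (forall m, (n <= mdeg m)%N -> p@_m = 0).
Proof.
split=> [hp m hm | hp]; first by apply/eqP; rewrite mcoeff_eq0 msize_mdeg_ge ?(leq_trans hp).
rewrite msizeE; apply/bigmax_leqP_seq => m hm _; rewrite ltnNge.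
by apply: contraL hm => /hp /eqP; rewrite mcoeff_eq0.
Qed.

Lemma msize_sum_le n (I : eqType) (s : seq I) (f : I -> {mpoly R[D]}) :
  (forall i, i \in s -> (msize (f i) <= n)%N) -> (msize (\sum_(i <- s) f i) <= n)%N.
Proof.
move=> hf; apply: leq_trans (msize_sum _ _ _) _.
by apply/bigmax_leqP_seq => i /hf.
Qed.

Lemma msizeMX_le p m : (msize (p * 'X_[m]) <= msize p + mdeg m)%N.
Proof.
rewrite [X in (X <= _)%N]msizeE; apply/bigmax_leqP_seq => m' + _.
rewrite (perm_mem (msuppMX p m)) => /mapP[m'' /msize_mdeg_lt hm'' ->].
by rewrite mdegD addnC -addSn leq_add2r.
Qed.

Lemma mcoeff_sumX (s : seq 'X_{1..D}) (f : 'X_{1..D} -> R) m : uniq s ->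
  (\sum_(c <- s) f c *: 'X_[c] : {mpoly R[D]})@_m = if m \in s then f m else 0.
Proof.
move=> us; rewrite -sum_delta // raddf_sum; apply: eq_bigr => c _.
by rewrite /= mcoeffZ mcoeffX.
Qed.

Lemma mpoly_expand_grl n p : (msize p <= n)%N ->
  p = \sum_(c <- grl D 0 n) p@_c *: 'X_[c].
Proof.
move=> /msize_leP hp; apply/mpolyP => m; rewrite mcoeff_sumX ?uniq_grl // mem_grl /=.
by case: ltnP => // /hp.
Qed.

End DegreeBounds.

Section MomentMatrix.
Variables (F : fieldType) (D : nat) (w : {mpoly F[D]} -> F).
Hypotheses (hw : lin_fun w) (qw : quasidef w).

(* The coefficient row of [p] is annihilated by the nonsingular truncated
   moment matrix. *)
Lemma lin_orth_eq0 n p : (msize p <= n)%N ->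
  (forall b, (mdeg b < n)%N -> w (p * 'X_[b]) = 0) -> p = 0.
Proof.
case: n => [|n] pn orth; first by apply/eqP; rewrite -msize_poly_eq0 -leqn0.
pose s := grl D 0 n.+1.
have uG : subml (mom w) s s \in unitmx by rewrite unitmxE unitfE; exact: qw.
pose z := \row_(i < size s) p@_(nth 0%MM s i).
have zG : z *m subml (mom w) s s = 0.
  apply/rowP => j; have /andP[_ sj] := mdeg_nth_grl j.
  rewrite !mxE -[RHS](orth _ sj) [in RHS](mpoly_expand_grl pn) mulr_suml lin_fun_sum //.
  rewrite (big_nth 0%MM) big_mkord; apply: eq_bigr => i _.
  by rewrite !mxE -scalerAl lin_funZ // mulrC.
have z0 : z = 0 by rewrite -(mulmxK uG z) zG mul0mx.
rewrite (mpoly_expand_grl pn) big1_seq // => c /andP[_ cs].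
have ci : (index c s < size s)%N by rewrite index_mem.
have := congr1 (fun M : 'rV_(size s) => M 0 (Ordinal ci)) z0.
by rewrite !mxE /= nth_index // => ->; rewrite scale0r.
Qed.

End MomentMatrix.

Section OrthogonalPolynomials.
Variables (F : fieldType) (D : nat) (S : smat D F).
Hypothesis hS : block_lower_unitri S.
Implicit Types (a b c m : 'X_{1..D}) (p : {mpoly F[D]}).

Lemma mcoeff_opoly a m : (opoly S a)@_m = if (mdeg m <= mdeg a)%N then S a m else 0.
Proof. by rewrite /opoly mcoeff_sumX ?uniq_grl // mem_grl. Qed.

Lemma mcoeff_opoly_ge a m : (mdeg a <= mdeg m)%N -> (opoly S a)@_m = (a == m)%:R.
Proof.
rewrite mcoeff_opoly leq_eqVlt => /orP[/eqP am | am].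
  by rewrite am leqnn; apply: (hS a m).2.
by rewrite leqNgt am; case: eqVneq am => // ->; rewrite ltnn.
Qed.

Lemma msize_opoly a : (msize (opoly S a) <= (mdeg a).+1)%N.
Proof. by apply/msize_leP => m am; rewrite mcoeff_opoly leqNgt am. Qed.

Lemma msize_opolyBX a : (msize (opoly S a - 'X_[a]) <= mdeg a)%N.
Proof. by apply/msize_leP => m am; rewrite mcoeffB mcoeff_opoly_ge // mcoeffX subrr. Qed.

Lemma opoly_basis n p : (msize p <= n)%N ->
  exists d : 'X_{1..D} -> F, p = \sum_(c <- grl D 0 n) d c *: opoly S c.
Proof.
elim: n p => [|n IH] p hp.
  by exists (fun _ => 0); move: hp; rewrite leqn0 msize_poly_eq0 big_nil => /eqP.
pose top := \sum_(c <- blk D n) p@_c *: opoly S c.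
have /IH[d hd] : (msize (p - top) <= n)%N.
  apply/msize_leP => m nm; rewrite mcoeffB raddf_sum /=.
  rewrite (eq_big_seq (fun c => p@_c * (c == m)%:R)); last first.
    by move=> c /[!mem_blk] /eqP cn; rewrite /= mcoeffZ mcoeff_opoly_ge ?cn.
  rewrite sum_delta ?uniq_blk // mem_blk; case: eqVneq => [_ | mn]; first exact: subrr.
  by rewrite subr0; move/msize_leP: hp; apply; rewrite ltn_neqAle eq_sym mn.
exists (fun c => if mdeg c == n then p@_c else d c).
rewrite grl0S big_cat /= -[LHS](subrK top) hd; congr (_ + _); apply: eq_big_seq => c.
  by rewrite mem_grl /= => cn; rewrite ifN // neq_ltn cn.
by rewrite mem_blk => ->.
Qed.

Section Orthogonality.
Variables (w : {mpoly F[D]} -> F) (H : smat D F).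
Hypotheses (hw : lin_fun w) (hGB : GB_fact (mom w) S H).

Lemma lin_opoly_mul a b : w (opoly S a * opoly S b) = H a b.
Proof.
case: hGB => _ _ <-; rewrite /opoly mulr_suml lin_fun_sum //; apply: eq_bigr => c _.
rewrite -scalerAl lin_funZ // mulr_sumr lin_fun_sum // mulr_sumr; apply: eq_bigr => d _.
by rewrite -scalerAr lin_funZ // /mom mulrA mulrAC.
Qed.

(* Induction on the degree bound: [x^c = P_c - (P_c - x^c)], and the second
   term has lower degree. *)
Lemma lin_opoly_mul_low a p : (msize p <= mdeg a)%N -> w (opoly S a * p) = 0.
Proof.
have [_ hH _] := hGB.
suff low n q : (n <= mdeg a)%N -> (msize q <= n)%N -> w (opoly S a * q) = 0.
  exact: low.
elim: n q => [|n IH] q na.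
  by rewrite leqn0 msize_poly_eq0 => /eqP ->; rewrite mulr0 lin_fun0.
move=> /mpoly_expand_grl ->; rewrite mulr_sumr lin_fun_sum // big1_seq // => c.
rewrite mem_grl => /andP[_ cn]; rewrite -scalerAr lin_funZ //.
rewrite -[X in opoly S a * X](subKr (opoly S c)) mulrBr lin_funB // lin_opoly_mul.
rewrite hH ?IH ?subrr ?mulr0 //; first exact: ltnW.
  exact: leq_trans (msize_opolyBX c) _.
by rewrite neq_ltn (leq_trans cn na) orbT.
Qed.

Lemma lin_opolyX_lt a b : (mdeg b < mdeg a)%N -> w (opoly S a * 'X_[b]) = 0.
Proof. by move=> ba; apply: lin_opoly_mul_low; rewrite msizeX. Qed.

Lemma lin_opolyX_eq a b : mdeg b = mdeg a -> w (opoly S a * 'X_[b]) = H a b.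
Proof.
move=> ba; rewrite -[X in opoly S a * X](subKr (opoly S b)) mulrBr lin_funB //.
by rewrite lin_opoly_mul lin_opoly_mul_low ?subr0 // -ba msize_opolyBX.
Qed.

Lemma lin_opolyX_le a b : (mdeg b <= mdeg a)%N ->
  w (opoly S a * 'X_[b]) = if mdeg b == mdeg a then H a b else 0.
Proof.
rewrite leq_eqVlt => /orP[/eqP ba | ba]; first by rewrite ba eqxx lin_opolyX_eq.
by rewrite lin_opolyX_lt // ifN // neq_ltn ba.
Qed.

Hypothesis qw : quasidef w.

Lemma opoly_span_orth l n p : (l <= n)%N -> (msize p <= n)%N ->
  (forall b, (mdeg b < l)%N -> w (p * 'X_[b]) = 0) ->
  exists d : 'X_{1..D} -> F, p = \sum_(c <- grl D l n) d c *: opoly S c.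
Proof.
move=> ln pn; have [d ->] := opoly_basis pn.
rewrite (@grl_cat _ 0 l n) // big_cat /= => orth.
set lo := \sum_(c <- grl D 0 l) _ in orth *; set hi := \sum_(c <- grl D l n) _ in orth *.
suff -> : lo = 0 by exists d; rewrite add0r.
have hi_orth b : (mdeg b < l)%N -> w (hi * 'X_[b]) = 0.
  move=> bl; rewrite mulr_suml lin_fun_sum // big1_seq // => c /andP[_].
  rewrite mem_grl => /andP[lc _]; rewrite -scalerAl lin_funZ // lin_opolyX_lt ?mulr0 //.
  exact: leq_trans bl lc.
apply: (lin_orth_eq0 hw qw (n := l)) => [|b bl].
  apply: msize_sum_le => c /[!mem_grl] /andP[_ cl].
  exact: leq_trans (msizeZ_le _ _) (leq_trans (msize_opoly c) cl).
by have := orth b bl; rewrite mulrDl lin_funD // hi_orth // addr0.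
Qed.

End Orthogonality.
End OrthogonalPolynomials.

Lemma msize_opolyB (F : fieldType) (D : nat) (S S' : smat D F) a :
  block_lower_unitri S -> block_lower_unitri S' ->
  (msize (opoly S a - opoly S' a) <= mdeg a)%N.
Proof.
move=> hS hS'; apply/msize_leP => m am.
by rewrite mcoeffB !mcoeff_opoly_ge // subrr.
Qed.

Lemma mpC_mx_mulinv (F : fieldType) (D m n : nat) (C : 'M[F]_(m, n)) (A : 'M[F]_n) :
  mpC_mx D C *m invmx (mpC_mx D A) = mpC_mx D (C *m invmx A).
Proof. by rewrite /mpC_mx -[fun c => c%:MP]/(@mpolyC D F) map_mxM map_invmx. Qed.

Section ChristoffelFormula.
Variables (F : fieldType) (D : nat) (u uc : {mpoly F[D]} -> F) (Q2 : {mpoly F[D]}).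
Variables (m2 k : nat) (S H Sc Hc : smat D F).
Variable beta : 'I_(size (grl D (k - m2) k)) -> 'X_{1..D}.
Hypotheses (hu : lin_fun u) (huc : lin_fun uc) (qu : quasidef u).
Hypotheses (sizeQ2 : msize Q2 = m2.+1) (ucQ2 : forall p, uc (Q2 * p) = u p).
Hypotheses (GBu : GB_fact (mom u) S H) (GBc : GB_fact (mom uc) Sc Hc).
Hypotheses (m2k : (m2 <= k)%N) (beta_lt : forall j, (mdeg (beta j) < k)%N).
Hypothesis poised : \det (subm (Rmat uc S) (grl D (k - m2) k) beta) != 0.

Local Notation rows := (grl D (k - m2) k).
Local Notation A := (subm (Rmat uc S) rows beta).
Local Notation C := (subm (Rmat uc S) (blk D k) beta).
Local Notation K := (C *m invmx A).

Let hS : block_lower_unitri S. Proof. by case: GBu. Qed.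
Let hSc : block_lower_unitri Sc. Proof. by case: GBc. Qed.
Let unit_A : A \in unitmx. Proof. by rewrite unitmxE unitfE. Qed.

Lemma poised_comb_eq0 (d : 'X_{1..D} -> F) :
  (forall j, uc ((\sum_(c <- rows) d c *: opoly S c) * 'X_[beta j]) = 0) ->
  \sum_(c <- rows) d c *: opoly S c = 0.
Proof.
move=> orth; pose dv := \row_(j < size rows) d (nth 0%MM rows j).
have dvA : dv *m A = 0.
  apply/rowP => j; rewrite !mxE -[RHS](orth j) mulr_suml lin_fun_sum //.
  rewrite (big_nth 0%MM) big_mkord; apply: eq_bigr => l _.
  by rewrite !mxE -scalerAl lin_funZ.
have dv0 : dv = 0 by rewrite -(mulmxK unit_A dv) dvA mul0mx.
rewrite (big_nth 0%MM) big_mkord big1 // => j _.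
have := congr1 (fun M : 'rV_(size rows) => M 0 j) dv0.
by rewrite !mxE => ->; rewrite scale0r.
Qed.

Lemma opoly_check_blk (i : 'I_(size (blk D k))) :
  opoly Sc (nth 0%MM (blk D k) i) = opoly S (nth 0%MM (blk D k) i)
    - \sum_(j < size rows) K i j *: opoly S (nth 0%MM rows j).
Proof.
set a := nth 0%MM (blk D k) i; have ak : mdeg a = k := mdeg_nth_blk i.
apply/eqP; rewrite -subr_eq0; apply/eqP; set W := _ - _.
have W_size : (msize W <= k)%N.
  rewrite /W opprB addrCA; apply: leq_trans (msizeD_le _ _) _; rewrite geq_max.
  rewrite (leq_trans (msize_opolyB a hSc hS)) ?ak // andbT.
  apply: msize_sum_le => j _.
  rewrite (leq_trans (msizeZ_le _ _)) // (leq_trans (msize_opoly S _)) //.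
  by case/andP: (mdeg_nth_grl j).
have W_orth b : (mdeg b < k - m2)%N -> u (W * 'X_[b]) = 0.
  move=> bk; rewrite /W mulrBl lin_funB // lin_fun_comb // -ucQ2 mulrCA.
  rewrite (lin_opoly_mul_low hSc huc GBc); last first.
    by rewrite ak; apply: leq_trans (msizeMX_le _ _) _; rewrite sizeQ2; lia.
  rewrite (lin_opolyX_lt hS hu GBu) ?ak; last by lia.
  rewrite big1 ?subrr // => j _; rewrite (lin_opolyX_lt hS hu GBu) ?mulr0 //.
  by case/andP: (mdeg_nth_grl j) => /(leq_trans bk).
have [d Wd] := opoly_span_orth hS hu GBu qu (leq_subr m2 k) W_size W_orth.
rewrite Wd; apply: poised_comb_eq0 => j; rewrite -Wd /W mulrBl lin_funB //.
rewrite lin_fun_comb // (lin_opolyX_lt hSc huc GBc) ?ak // sub0r.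
apply/eqP; rewrite oppr_eq0 subr_eq0; apply/eqP.
have -> : uc (opoly S a * 'X_[beta j]) = C i j by rewrite mxE.
rewrite -[in LHS](mulmxKV unit_A C) mxE.
by apply: eq_bigr => l _; rewrite [A l j]mxE.
Qed.

Lemma lin_opoly_check_mul w (hw : lin_fun w) (i : 'I_(size (blk D k))) x :
  w (opoly Sc (nth 0%MM (blk D k) i) * x) = w (opoly S (nth 0%MM (blk D k) i) * x)
    - \sum_(j < size rows) K i j * w (opoly S (nth 0%MM rows j) * x).
Proof. by rewrite opoly_check_blk lin_fun_comb. Qed.

Lemma pcol_opoly_check :
  pcol (opoly Sc) (blk D k)
  = qdet (mpC_mx D A) (pcol (opoly S) rows) (mpC_mx D C) (pcol (opoly S) (blk D k)).
Proof.
rewrite /qdet mpC_mx_mulinv; apply/matrixP => i j; rewrite !mxE opoly_check_blk.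
by congr (_ - _); apply: eq_bigr => l _; rewrite !mxE mul_mpolyC.
Qed.

Lemma Hcheck_qdet :
  subml Hc (blk D k) (blk D k)
  = qdet A (subml (Rmat uc S) rows (blk D k)) C (subml (Rmat uc S) (blk D k) (blk D k)).
Proof.
apply/matrixP => i j; rewrite /qdet !mxE.
rewrite -(lin_opolyX_eq hSc huc GBc) ?mdeg_nth_blk // lin_opoly_check_mul //.
by congr (_ - _); apply: eq_bigr => l _; rewrite !mxE.
Qed.

Lemma lin_opoly_checkX_QLam a y : mdeg a = k -> mdeg y = (k - m2)%N ->
  u (opoly Sc a * 'X_[y]) = \sum_(b <- blk D k) Hc a b * QLam Q2 y b.
Proof.
move=> ak yk; have Q2X : Q2 * 'X_[y] = \sum_(m <- msupp Q2) Q2@_m *: 'X_[(y + m)%MM].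
  rewrite {1}(mpolyE Q2) mulr_suml; apply: eq_bigr => m _.
  by rewrite -scalerAl -mpolyXD addmC.
rewrite -ucQ2 mulrCA Q2X mulr_sumr lin_fun_sum // /QLam.
under [RHS]eq_bigr do rewrite mulr_sumr.
rewrite exchange_big /=; apply: eq_big_seq => m mQ2.
rewrite -scalerAr lin_funZ // (lin_opolyX_le hSc huc GBc); last first.
  by rewrite mdegD yk ak; have := msize_mdeg_lt mQ2; rewrite sizeQ2; lia.
rewrite (eq_bigr (fun b => Q2@_m * (Hc a b * (b == (y + m)%MM)%:R))) => [|b _].
  by rewrite -mulr_sumr sum_delta ?uniq_blk // mem_blk ak.
by rewrite mulrCA eq_sym.
Qed.

Lemma Hcheck_QLam_qdet :
  subml Hc (blk D k) (blk D k) *m (subml (QLam Q2) (blk D (k - m2)) (blk D k))^T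
  = qdet A (subml (Hlast H k m2) rows (blk D (k - m2)))
         C (subml (Hlast H k m2) (blk D k) (blk D (k - m2))).
Proof.
apply/matrixP => i g; rewrite /qdet !mxE.
set y := nth 0%MM (blk D (k - m2)) g; have yk : mdeg y = (k - m2)%N := mdeg_nth_blk g.
have u_Hlast x : (k - m2 <= mdeg x)%N -> u (opoly S x * 'X_[y]) = Hlast H k m2 x y.
  by move=> xk; rewrite (lin_opolyX_le hS hu GBu) ?yk // /Hlast eq_sym.
transitivity (u (opoly Sc (nth 0%MM (blk D k) i) * 'X_[y])).
  rewrite lin_opoly_checkX_QLam ?mdeg_nth_blk // [RHS](big_nth 0%MM) big_mkord.
  by apply: eq_bigr => j _; rewrite !mxE.
rewrite lin_opoly_check_mul // u_Hlast ?mdeg_nth_blk ?leq_subr //; congr (_ - _).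
by apply: eq_bigr => l _; rewrite !mxE u_Hlast //; case/andP: (mdeg_nth_grl l).
Qed.

End ChristoffelFormula.

Theorem mainTheorem5 (R : realType) (D : nat)
    (u uc : {mpoly R[i][D]} -> R[i]) (Q2 : {mpoly R[i][D]}) (m2 : nat)
    (S H Sc Hc : smat D R[i]) (k : nat)
    (beta : 'I_(size (grl D (k - m2) k)) -> 'X_{1..D}) :
  lin_fun u -> lin_fun uc ->
  Q2 != 0 -> msize Q2 = m2.+1 ->
  (forall p : {mpoly R[i][D]}, uc (Q2 * p) = u p) ->
  quasidef u -> quasidef uc ->
  GB_fact (mom u) S H -> GB_fact (mom uc) Sc Hc ->
  (m2 <= k)%N ->
  injective beta ->
  (forall j, (mdeg (beta j) < k)%N) ->
  \det (subm (Rmat uc S) (grl D (k - m2) k) beta) != 0 ->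
  let Rm := Rmat uc S in
  let rows := grl D (k - m2) k in
  [/\ pcol (opoly Sc) (blk D k)
      = qdet (mpC_mx D (subm Rm rows beta)) (pcol (opoly S) rows)
             (mpC_mx D (subm Rm (blk D k) beta)) (pcol (opoly S) (blk D k)),
      subml Hc (blk D k) (blk D k) *m (subml (QLam Q2) (blk D (k - m2)) (blk D k))^T
      = qdet (subm Rm rows beta) (subml (Hlast H k m2) rows (blk D (k - m2)))
             (subm Rm (blk D k) beta) (subml (Hlast H k m2) (blk D k) (blk D (k - m2))) &
      subml Hc (blk D k) (blk D k)
      = qdet (subm Rm rows beta) (subml Rm rows (blk D k))
             (subm Rm (blk D k) beta) (subml Rm (blk D k) (blk D k))].
Proof.
move=> hu huc _ sizeQ2 ucQ2 qu _ GBu GBc m2k _ beta_lt poised Rm rows.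
split.
- exact: pcol_opoly_check hu huc qu sizeQ2 ucQ2 GBu GBc m2k beta_lt poised.
- exact: Hcheck_QLam_qdet hu huc qu sizeQ2 ucQ2 GBu GBc m2k beta_lt poised.
- exact: Hcheck_qdet hu huc qu sizeQ2 ucQ2 GBu GBc m2k beta_lt poised.
Qed.
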